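(* Let $(x^*,y^* )$ be an optimal solution of the LP relaxation of an FTFP instance $\mathcal I$ which is complete (i.e. $x^*_{ij}\in\{0,y^*_i\}$ for all $i,j$) and satisfies $\sum_{i\in F}x^*_{ij}=r_j$ for all $j\in C$. Fix $\bar r$ with $1\le \bar r\le \min_{j\in C} r_j$. Define for all $i\in F$, $j\in C$: $$\hat y_i=\max\{\lfloor y^*_i-\bar r\rfloor,0\},\quad \hat x_{ij}=\max\{\lfloor x^*_{ij}-\bar r\rfloor,0\},\quad \dot y_i=y^*_i-\hat y_i,\quad \dot x_{ij}=x^*_{ij}-\hat x_{ij}.$$ Let $\hat{\mathcal I}$ (resp. $\dot{\mathcal I}$) be the FTFP instance with the same facilities, clients, opening costs and connection costs as $\mathcal I$, but with requirements $\hat r_j=\sum_{i\in F}\hat x_{ij}$ (resp. $\dot r_j=\sum_{i\in F}\dot x_{ij}$). Then: (i) $(\hat x,\hat y)$ is a feasible integral solution of $\hat{\mathcal I}$; (ii) $(\dot x,\dot y)$ is a feasible fractional solution of the LP relaxation of $\dot{\mathcal I}$; (iii) $(\hat x,\hat y)$ and $(\dot x,\dot y)$ are optimal solutions of the LP relaxations of $\hat{\mathcal I}$ and $\dot{\mathcal I}$, respectively; (iv) for every $j\in C$, $\bar r\le \dot r_j\le (\bar r+1)\,|F|$.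
   Context: Metric Fault-Tolerant Facility Placement (FTFP): a finite set $F$ of facilities with opening costs $f_i\ge 0$, a finite set $C$ of clients with requirements $r_j$, and metric connection costs $c_{ij}$; each facility may be opened any number of times (cost $f_i$ per copy) and each client $j$ must be connected to $r_j$ open copies. Its LP relaxation is: minimize $\sum_{i,j}c_{ij}x_{ij}+\sum_i f_iy_i$ subject to $\sum_{i\in F}x_{ij}\ge r_j$ for all $j$, $y_i-x_{ij}\ge 0$ for all $i,j$, $x,y\ge 0$. A feasible integral solution is a feasible LP solution with integer entries. *)

From HB Require Import structures.
From mathcomp Require Import all_boot all_order all_algebra.
Set Implicit Arguments. Unset Strict Implicit. Unset Printing Implicit Defensive.
Import Order.TTheory GRing.Theory Num.Theory.
Local Open Scope ring_scope.

Section FTFP.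
Variables (R : archiRealFieldType) (F C : finType).

Definition ftfp_metric (c : F -> C -> R) : Prop :=
  exists d : (F + C)%type -> (F + C)%type -> R,
    [/\ forall u v, 0 <= d u v,
        forall u, d u u = 0,
        forall u v, d u v = d v u,
        forall u v w, d u w <= d u v + d v w
      & forall i j, c i j = d (inl i) (inr j)].

Definition ftfp_cost (f : F -> R) (c : F -> C -> R)
    (x : F -> C -> R) (y : F -> R) : R :=
  \sum_(i : F) \sum_(j : C) c i j * x i j + \sum_(i : F) f i * y i.

Definition ftfp_lp_feasible (r : C -> R) (x : F -> C -> R) (y : F -> R) : Prop :=
  [/\ forall j, r j <= \sum_(i : F) x i j,
      forall i j, 0 <= y i - x i j,
      forall i j, 0 <= x i j
    & forall i, 0 <= y i].

Definition ftfp_lp_optimal (f : F -> R) (c : F -> C -> R) (r : C -> R)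
    (x : F -> C -> R) (y : F -> R) : Prop :=
  ftfp_lp_feasible r x y /\
  forall x' y', ftfp_lp_feasible r x' y' -> ftfp_cost f c x y <= ftfp_cost f c x' y'.

Definition ftfp_integral_feasible (r : C -> R) (x : F -> C -> R) (y : F -> R) : Prop :=
  ftfp_lp_feasible r x y /\
  (forall i j, x i j \is a Num.int) /\ (forall i, y i \is a Num.int).

Definition ftfp_complete (x : F -> C -> R) (y : F -> R) : Prop :=
  forall i j, x i j = 0 \/ x i j = y i.

Definition hat_part (rbar v : R) : R := Num.max (Num.floor (v - rbar))%:~R 0.

End FTFP.

From HB Require Import structures.
From mathcomp Require Import all_boot all_order all_algebra.
From mathcomp Require Import lra.
Set Implicit Arguments. Unset Strict Implicit. Unset Printing Implicit Defensive.
Import Order.TTheory GRing.Theory Num.Theory.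
Local Open Scope ring_scope.

(* The LP objective is linear, and LP feasibility is stable under adding two
   solutions (requirements add up).  Hence, if an optimal solution (x, y) of
   the instance with requirements r is the sum of two feasible solutions
   (a, ya) and (b, yb) whose requirements satisfy r <= ra + rb, then each
   summand is optimal for its own requirements: a cheaper competitor for one
   summand, added to the other summand, would beat (x, y).

   The splitting x = hat x + (x - hat x), with hat v = max(floor(v - rbar), 0),
   then needs only pointwise facts on hat: it is a nonnegative integer, at most
   v, monotone, and 0 below rbar, and v - hat v lies in [rbar, rbar + 1] as soon
   as v >= rbar.  Completeness (x_ij in {0, y_i}) makes y - x >= 0 survive the
   splitting, and tightness (sum_i x_ij = r_j >= rbar) gives the bounds on the
   requirements of the fractional part. *)

Section LPSolutions.
Variables (R : archiRealFieldType) (F C : finType).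
Variables (f : F -> R) (c : F -> C -> R).

Lemma ftfp_cost_split (x a b : F -> C -> R) (y ya yb : F -> R) :
  (forall i j, x i j = a i j + b i j) -> (forall i, y i = ya i + yb i) ->
  ftfp_cost f c x y = ftfp_cost f c a ya + ftfp_cost f c b yb.
Proof.
move=> ex ey; rewrite /ftfp_cost.
have -> : \sum_i \sum_j c i j * x i j =
    \sum_i \sum_j c i j * a i j + \sum_i \sum_j c i j * b i j.
  rewrite -big_split; apply: eq_bigr => i _; rewrite -big_split.
  by apply: eq_bigr => j _; rewrite ex mulrDr.
have -> : \sum_i f i * y i = \sum_i f i * ya i + \sum_i f i * yb i.
  by rewrite -big_split; apply: eq_bigr => i _; rewrite ey mulrDr.
by rewrite addrACA.
Qed.

Lemma ftfp_lp_feasibleD (ra rb : C -> R) (a b : F -> C -> R) (ya yb : F -> R) :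
  ftfp_lp_feasible ra a ya -> ftfp_lp_feasible rb b yb ->
  ftfp_lp_feasible (fun j => ra j + rb j)
    (fun i j => a i j + b i j) (fun i => ya i + yb i).
Proof.
move=> [ra_a ya_a a0 ya0] [rb_b yb_b b0 yb0]; split.
- by move=> j; rewrite big_split lerD.
- by move=> i j; rewrite opprD addrACA addr_ge0.
- by move=> i j; rewrite addr_ge0.
- by move=> i; rewrite addr_ge0.
Qed.

Lemma ftfp_lp_feasible_own (x : F -> C -> R) (y : F -> R) :
  (forall i j, 0 <= y i - x i j) -> (forall i j, 0 <= x i j) ->
  (forall i, 0 <= y i) -> ftfp_lp_feasible (fun j => \sum_i x i j) x y.
Proof. by split. Qed.

Lemma ftfp_lp_optimal_summand (r ra rb : C -> R) (x a b : F -> C -> R)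
    (y ya yb : F -> R) :
  (forall i j, x i j = a i j + b i j) -> (forall i, y i = ya i + yb i) ->
  ftfp_lp_optimal f c r x y ->
  ftfp_lp_feasible ra a ya -> ftfp_lp_feasible rb b yb ->
  (forall j, r j <= ra j + rb j) -> ftfp_lp_optimal f c ra a ya.
Proof.
move=> ex ey [_ opt] feas_a feas_b r_le; split=> // a' ya' feas_a'.
have := opt (fun i j => a' i j + b i j) (fun i => ya' i + yb i).
rewrite (ftfp_cost_split ex ey).
rewrite (@ftfp_cost_split (fun i j => a' i j + b i j) a' b _ ya' yb) // lerD2r.
apply; have [cover_r ? ? ?] := ftfp_lp_feasibleD feas_a' feas_b.
by split=> // j; apply: le_trans (r_le j) (cover_r j).
Qed.

End LPSolutions.

Section HatPart.
Variables (R : archiRealFieldType) (rbar : R).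
Hypothesis rbar_ge1 : 1 <= rbar.

Let rbar_gt0 : 0 < rbar.
Proof. exact: lt_le_trans ltr01 rbar_ge1. Qed.

Lemma hat_part_ge0 v : 0 <= hat_part rbar v.
Proof. by rewrite /hat_part le_max lexx orbT. Qed.

Lemma hat_part_int v : hat_part rbar v \is a Num.int.
Proof.
rewrite /hat_part /Num.max.
by case: ifP => _; [exact: rpred0 | exact: rpred_int].
Qed.

Lemma hat_part_le v : 0 <= v -> hat_part rbar v <= v.
Proof.
move=> v0; rewrite /hat_part ge_max v0 andbT.
by apply: le_trans (floor_le _) _; rewrite lerBlDr lerDl ltW.
Qed.

Lemma hat_part_mono u v : u <= v -> hat_part rbar u <= hat_part rbar v.
Proof.
move=> le_uv; rewrite /hat_part ge_max !le_max lexx !orbT andbT.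
by rewrite ler_int le_floor // lerD2r.
Qed.

Lemma hat_part_small v : v < rbar -> hat_part rbar v = 0.
Proof.
move=> lt_v; apply/eqP; rewrite eq_le hat_part_ge0 andbT /hat_part ge_max lexx.
by rewrite andbT lerz0 ltW // floor_lt0 subr_lt0.
Qed.

Lemma hat_part0 : hat_part rbar 0 = 0.
Proof. exact: hat_part_small. Qed.

Lemma hat_part_large v :
  rbar <= v -> hat_part rbar v = (Num.floor (v - rbar))%:~R.
Proof. by move=> le_v; apply/max_idPl; rewrite ler0z floor_ge0 subr_ge0. Qed.

Lemma frac_part_ge v : rbar <= v -> rbar <= v - hat_part rbar v.
Proof.
by move=> le_v; rewrite hat_part_large // lerBrDr addrC -lerBrDr floor_le.
Qed.

Lemma frac_part_le v : 0 <= v -> v - hat_part rbar v <= rbar + 1.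
Proof.
move=> v0; case: (ltP v rbar) => [lt_v | le_v].
  by rewrite hat_part_small // subr0 ltW // (lt_le_trans lt_v) // lerDl.
rewrite hat_part_large //; have := floorD1_gt (v - rbar); rewrite intrD.
by move: ((Num.floor (v - rbar))%:~R : R) => t; lra.
Qed.

Variable F : finType.

(* A nonnegative family summing to at least rbar keeps at least rbar in its
   fractional parts: either one member reaches rbar, or nothing is removed. *)
Lemma frac_sum_ge (v : F -> R) : (forall i, 0 <= v i) -> rbar <= \sum_i v i ->
  rbar <= \sum_i (v i - hat_part rbar (v i)).
Proof.
move=> v0 le_sum; have frac0 i : 0 <= v i - hat_part rbar (v i).
  by rewrite subr_ge0 hat_part_le.
have [/existsP[i le_vi] | small] := boolP [exists i, rbar <= v i].
  rewrite (bigD1 i) //=; apply: le_trans (frac_part_ge le_vi) _.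
  by rewrite lerDl sumr_ge0.
suff -> : \sum_i (v i - hat_part rbar (v i)) = \sum_i v i by [].
apply: eq_bigr => i _; rewrite hat_part_small ?subr0 // ltNge.
by apply: contra small => le_vi; apply/existsP; exists i.
Qed.

Lemma frac_sum_le (v : F -> R) : (forall i, 0 <= v i) ->
  \sum_i (v i - hat_part rbar (v i)) <= (rbar + 1) * #|F|%:R.
Proof.
move=> v0; rewrite mulr_natr -sumr_const.
by apply: ler_sum => i _; apply: frac_part_le.
Qed.

Variable C : finType.
Variables (x : F -> C -> R) (y : F -> R).
Hypothesis y_x_ge0 : forall i j, 0 <= y i - x i j.
Hypothesis x_ge0 : forall i j, 0 <= x i j.
Hypothesis y_ge0 : forall i, 0 <= y i.

Lemma hat_solution_feasible :
  ftfp_lp_feasible (fun j => \sum_i hat_part rbar (x i j))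
    (fun i j => hat_part rbar (x i j)) (fun i => hat_part rbar (y i)).
Proof.
apply: ftfp_lp_feasible_own => [i j|i j|i]; rewrite ?hat_part_ge0 //.
by rewrite subr_ge0 hat_part_mono // -subr_ge0.
Qed.

(* Completeness is what keeps y - x >= 0 in the fractional part: where
   x_ij = y_i the gap is 0, and where x_ij = 0 it is the fractional part of y_i. *)
Lemma frac_solution_feasible : ftfp_complete x y ->
  ftfp_lp_feasible (fun j => \sum_i (x i j - hat_part rbar (x i j)))
    (fun i j => x i j - hat_part rbar (x i j))
    (fun i => y i - hat_part rbar (y i)).
Proof.
move=> complete; apply: ftfp_lp_feasible_own => [i j|i j|i]; last 2 first.
- by rewrite subr_ge0 hat_part_le.
- by rewrite subr_ge0 hat_part_le.
case: (complete i j) => ->; last by rewrite subrr.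
by rewrite hat_part0 !subr0 subr_ge0 hat_part_le.
Qed.

End HatPart.

Theorem lemma6 (R : archiRealFieldType) (F C : finType)
    (f : F -> R) (c : F -> C -> R) (r : C -> nat)
    (hf : forall i, 0 <= f i) (hc : ftfp_metric c)
    (xs : F -> C -> R) (ys : F -> R)
    (hopt : ftfp_lp_optimal f c (fun j => (r j)%:R) xs ys)
    (hcomplete : ftfp_complete xs ys)
    (htight : forall j, \sum_(i : F) xs i j = (r j)%:R)
    (rbar : R) (hrbar1 : 1 <= rbar) (hrbar2 : forall j, rbar <= (r j)%:R) :
  let yhat := fun i => hat_part rbar (ys i) in
  let xhat := fun i j => hat_part rbar (xs i j) in
  let ydot := fun i => ys i - yhat i in
  let xdot := fun i j => xs i j - xhat i j in
  let rhat := fun j => \sum_(i : F) xhat i j in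
  let rdot := fun j => \sum_(i : F) xdot i j in
  [/\ ftfp_integral_feasible rhat xhat yhat,
      ftfp_lp_feasible rdot xdot ydot,
      ftfp_lp_optimal f c rhat xhat yhat /\ ftfp_lp_optimal f c rdot xdot ydot
    & forall j, rbar <= rdot j /\ rdot j <= (rbar + 1) * #|F|%:R].
Proof.
move=> yhat xhat ydot xdot rhat rdot.
have [[cover_r ys_xs xs0 ys0] _] := hopt.
have feas_hat : ftfp_lp_feasible rhat xhat yhat :=
  hat_solution_feasible rbar ys_xs.
have feas_dot : ftfp_lp_feasible rdot xdot ydot :=
  frac_solution_feasible hrbar1 xs0 ys0 hcomplete.
have x_split i j : xs i j = xhat i j + xdot i j by rewrite /xdot /= subrKC.
have y_split i : ys i = yhat i + ydot i by rewrite /ydot /= subrKC.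
have cover_split j : (r j)%:R <= rhat j + rdot j.
  rewrite -big_split; apply: le_trans (cover_r j) (ler_sum _ _) => i _.
  by rewrite [leLHS]x_split.
split=> //.
- by split=> //; split=> *; apply: hat_part_int.
- split.
  + exact: (ftfp_lp_optimal_summand x_split y_split hopt feas_hat feas_dot).
  + apply: (ftfp_lp_optimal_summand _ _ hopt feas_dot feas_hat) => [i j|i|j].
    * by rewrite x_split addrC.
    * by rewrite y_split addrC.
    * by rewrite addrC.
- move=> j; split; last exact: frac_sum_le.
  by apply: frac_sum_ge => //; rewrite htight.
Qed.
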